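(* Let $m$ be a positive integer and suppose there exists an $m\times m$ panstochastic matrix that is not a convex combination of panmagic permutation matrices. Let $n$ be a positive integer with $\gcd(n,6)=1$. Then there exists an $(mn)\times(mn)$ panstochastic matrix that is not a convex combination of panmagic permutation matrices.
   Context: Rows and columns of $n\times n$ matrices are indexed by $\Omega_n=\{0,\dots,n-1\}$. The $k$th upward (resp. downward) diagonal consists of positions $(i,j)$ with $i+j\equiv k$ (resp. $i-j\equiv k$) $\pmod n$. A real $n\times n$ matrix is panstochastic if its entries are nonnegative and its entries along every row, column, upward diagonal and downward diagonal sum to $1$. A panmagic permutation matrix is a permutation matrix $P_\pi$ ($(i,j)$ entry $1$ if $i=\pi(j)$, else $0$) that is panstochastic. A convex combination is a linear combination with nonnegative coefficients summing to $1$. *)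

From mathcomp Require Import all_boot all_order all_algebra all_fingroup.
Set Implicit Arguments. Unset Strict Implicit. Unset Printing Implicit Defensive.
Import Order.TTheory GRing.Theory Num.Theory.
Local Open Scope ring_scope.

(* Rows/columns indexed by 'I_n = {0,..,n-1}.
   k-th upward diagonal: (i + j) = k mod n; k-th downward: i - j = k mod n,
   written in nat as (i + (n - j)) %% n == k (j < n). *)
Definition panstochastic (R : realFieldType) (n : nat) (A : 'M[R]_n) : Prop :=
  (forall i j, 0 <= A i j) /\
  (forall i : 'I_n, \sum_(j < n) A i j = 1) /\
  (forall j : 'I_n, \sum_(i < n) A i j = 1) /\
  (forall k : 'I_n, \sum_(i < n) \sum_(j < n | ((i + j) %% n == k)%N) A i j = 1) /\
  (forall k : 'I_n, \sum_(i < n) \sum_(j < n | ((i + (n - j)) %% n == k)%N) A i j = 1).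

Definition perm_matrix (R : realFieldType) (n : nat) (pi : {perm 'I_n}) : 'M[R]_n :=
  \matrix_(i < n, j < n) (if i == pi j then 1 else 0).

Definition panmagic_perm (R : realFieldType) (n : nat) (pi : {perm 'I_n}) : Prop :=
  panstochastic (perm_matrix R pi).

Definition convex_comb_panmagic (R : realFieldType) (n : nat) (A : 'M[R]_n) : Prop :=
  exists c : {perm 'I_n} -> R,
    (forall pi, 0 <= c pi) /\
    (forall pi, c pi != 0 -> panmagic_perm R pi) /\
    \sum_(pi : {perm 'I_n}) c pi = 1 /\
    A = \sum_(pi : {perm 'I_n}) c pi *: perm_matrix R pi.

(* The matrix B := A ⊗ P, where P is the permutation matrix of t ↦ 2t (mod n), works.
   Write an index of size mn as a n + s.  For each of the four families of lines (rows,
   columns, upward and downward diagonals), the line of size mn through the cell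
   (a n + s, b n + t) is determined by the line of P through (s, t) together with the
   line of A through (a, b), shifted by a carry that depends on (s, t) only.  Hence the
   Kronecker product of two panstochastic matrices is panstochastic, and P is panmagic
   because its entry in column t lies on row 2t, upward diagonal 3t and downward
   diagonal 2t - t = t, and t ↦ 2t, 3t are bijections modulo n when gcd(n, 6) = 1.
   Conversely, the entries of A ⊗ P in the column block 0 vanish outside the row block
   2·0 = 0, so every panmagic permutation in a convex decomposition of A ⊗ P maps that
   column block into that row block, and so permutes the blocks by a panmagic
   permutation of size m; regrouping the weights by block permutation decomposes A. *)

From mathcomp Require Import all_boot all_order all_algebra all_fingroup.
From mathcomp Require Import mxtens zify.
Set Implicit Arguments. Unset Strict Implicit. Unset Printing Implicit Defensive.
Import Order.TTheory GRing.Theory Num.Theory.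

Lemma eqn_mulnD n q1 r1 q2 r2 : r1 < n -> r2 < n ->
  (q1 * n + r1 == q2 * n + r2) = (q1 == q2) && (r1 == r2).
Proof.
move=> r1n r2n; apply/eqP/andP => [E|[/eqP-> /eqP->]] //.
by have := congr1 (edivn^~ n) E; rewrite /= !edivn_eq // => -[-> ->].
Qed.

Lemma modn_mulnD m n q r : 0 < m -> r < n -> (q * n + r) %% (m * n) = q %% m * n + r.
Proof.
move=> m_gt0 rn; rewrite {1}(divn_eq q m) mulnDl -mulnA -addnA modnMDl modn_small //.
apply: (@leq_trans (q %% m * n + n)); first by rewrite ltn_add2l.
by rewrite -mulSnr leq_mul2r ltn_pmod // orbT.
Qed.

Lemma modnD_eq_shift m x c k : x < m -> k < m ->
  ((x + c) %% m == k) = (x == (k + (m - c %% m)) %% m).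
Proof.
move=> xm km; have m_gt0 : 0 < m by apply: leq_ltn_trans xm.
have E : k + (m - c %% m) + c = k %[mod m].
  by rewrite -modnDmr -addnA (subnK (ltnW (ltn_pmod c m_gt0))) modnDr.
by rewrite -[in LHS](modn_small km) -[in RHS](modn_small xm) -[in RHS](eqn_modDr c) E.
Qed.

Lemma mulmod_inj n c : coprime c n -> injective (fun j : 'I_n => c * j %% n).
Proof.
move=> co j1 j2 E; apply: val_inj => /=.
wlog le12 : j1 j2 E / j1 <= j2.
  by move=> W; case: (leqP j1 j2) => [|/ltnW] le; [|symmetry]; apply: W.
have : n %| j2 - j1.
  rewrite coprime_sym in co.
  by rewrite -(Gauss_dvdr (j2 - j1) co) mulnBr -eqn_mod_dvd ?leq_mul2l ?le12 ?orbT // E.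
rewrite /dvdn modn_small => [/eqP|]; last by rewrite (leq_ltn_trans (leq_subr _ _)).
by move/eqP; rewrite subn_eq0 => le21; apply/eqP; rewrite eqn_leq le12.
Qed.

Inductive line_kind := Row | Col | Up | Down.

Definition line (d : line_kind) (N i j : nat) : nat :=
  match d with
  | Row => i
  | Col => j
  | Up => (i + j) %% N
  | Down => (i + (N - j)) %% N
  end.

Lemma line_lt d N i j : i < N -> j < N -> line d N i j < N.
Proof. by case: d => /= iN jN //; rewrite ltn_pmod // (leq_ltn_trans _ iN). Qed.

Lemma line_mulnD d m n s t : 0 < m -> s < n -> t < n ->
  exists c, forall a b, a < m -> b < m ->
    line d (m * n) (a * n + s) (b * n + t) = (line d m a b + c) %% m * n + line d n s t.
Proof.
move=> m_gt0 sn tn; case: d => /=.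
- by exists 0 => a b am _; rewrite addn0 modn_small.
- by exists 0 => a b _ bm; rewrite addn0 modn_small.
- exists ((s + t) %/ n) => a b _ _.
  rewrite addnACA -mulnDl {1}(divn_eq (s + t) n) addnA -mulnDl.
  by rewrite modn_mulnD ?ltn_pmod ?(leq_ltn_trans _ sn) // modnDml.
- exists (m.-1 + (s + (n - t)) %/ n) => a b _ bm.
  have -> : m * n - (b * n + t) = (m - b.+1) * n + (n - t) by nia.
  rewrite addnACA -mulnDl {1}(divn_eq (s + (n - t)) n) addnA -mulnDl.
  rewrite modn_mulnD ?ltn_pmod ?(leq_ltn_trans _ sn) // modnDml !addnA.
  have -> : a + (m - b) + m.-1 = a + (m - b.+1) + m by lia.
  by rewrite [in RHS]addnAC modnDr.
Qed.

Local Open Scope ring_scope.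

Definition line_sum (V : nmodType) n d (M : 'M[V]_n) (k : nat) : V :=
  \sum_(i < n) \sum_(j < n | line d n i j == k) M i j.

Lemma line_sum_Row (V : nmodType) n (M : 'M[V]_n) (k : 'I_n) :
  line_sum Row M k = \sum_j M k j.
Proof.
rewrite /line_sum (bigD1 k) //= [X in _ + X]big1 ?addr0 => [|i ik].
  by apply: eq_bigl => j; rewrite /= eqxx.
by rewrite big_pred0 // => j; exact: negbTE ik.
Qed.

Lemma line_sum_Col (V : nmodType) n (M : 'M[V]_n) (k : 'I_n) :
  line_sum Col M k = \sum_i M i k.
Proof. by apply: eq_bigr => i _; rewrite big_pred1_eq. Qed.

Lemma panstochasticE (R : realFieldType) n (A : 'M[R]_n) :
  panstochastic A <->
  (forall i j, 0 <= A i j) /\ (forall d (k : 'I_n), line_sum d A k = 1).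
Proof.
split=> [[A_ge0 [Ar [Ac [Au Ad]]]] | [A_ge0 Al]].
  split=> // -[] k; rewrite ?line_sum_Row ?line_sum_Col.
  - exact: Ar.
  - exact: Ac.
  - exact: Au.
  - exact: Ad.
do ![split] => // k.
- by rewrite -line_sum_Row.
- by rewrite -line_sum_Col.
- exact: (Al Up).
- exact: (Al Down).
Qed.

Lemma sum_mxtens_index (V : nmodType) m n (F : 'I_(m * n) -> V) :
  \sum_i F i = \sum_(a < m) \sum_(s < n) F (mxtens_index (a, s)).
Proof.
rewrite pair_big (reindex (@mxtens_index m n)) /=; first by apply: eq_bigr => -[].
by exists (@mxtens_unindex m n) => i _; rewrite ?mxtens_indexK ?mxtens_unindexK.
Qed.

Lemma line_sum_shift (R : pzSemiRingType) m d (A : 'M[R]_m) (c : nat) (k : 'I_m) :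
  (forall k : 'I_m, line_sum d A k = 1) ->
  \sum_(a < m) \sum_(b < m | ((line d m a b + c) %% m == k)%N) A a b = 1.
Proof.
move=> Al; have m_gt0 : (0 < m)%N by apply: leq_ltn_trans (ltn_ord k).
rewrite -(Al (Ordinal (ltn_pmod (k + (m - c %% m)) m_gt0))).
apply: eq_bigr => a _; apply: eq_bigl => b.
by rewrite modnD_eq_shift ?line_lt.
Qed.

Lemma line_sum_tensmx (R : pzRingType) m n d (A : 'M[R]_m) (C : 'M[R]_n) :
  (forall k : 'I_m, line_sum d A k = 1) -> (forall k : 'I_n, line_sum d C k = 1) ->
  forall k : 'I_(m * n), line_sum d (A *t C) k = 1.
Proof.
move=> Al Cl k; case: (mxtens_indexP k) => k1 k2.
have m_gt0 : (0 < m)%N by apply: leq_ltn_trans (ltn_ord k1).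
rewrite /line_sum sum_mxtens_index -[RHS](Cl k2) exchange_big.
apply: eq_bigr => s _; rewrite [RHS]big_mkcond /=.
under eq_bigr do rewrite big_mkcond sum_mxtens_index exchange_big.
rewrite exchange_big; apply: eq_bigr => t _.
have [c Lc] := line_mulnD d m_gt0 (ltn_ord s) (ltn_ord t).
under eq_bigr do under eq_bigr do
  rewrite /= Lc ?ltn_ord // tensmxE eqn_mulnD ?ltn_pmod ?line_lt ?ltn_ord //.
case: eqP => _; last by rewrite big1 // => a _; rewrite big1 // => b _; rewrite andbF.
rewrite -[RHS]mul1r -(line_sum_shift c k1 Al) !mulr_suml.
apply: eq_bigr => a _; rewrite mulr_suml [RHS]big_mkcond.
by apply: eq_bigr => b _; rewrite andbT; case: ifP; rewrite ?mul0r.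
Qed.

Lemma panstochastic_tensmx (R : realFieldType) m n (A : 'M[R]_m) (C : 'M[R]_n) :
  panstochastic A -> panstochastic C -> panstochastic (A *t C).
Proof.
move=> /panstochasticE[A_ge0 Al] /panstochasticE[C_ge0 Cl]; apply/panstochasticE.
by split=> [i j|d]; [rewrite mxE mulr_ge0 | exact: line_sum_tensmx].
Qed.

Lemma line_sum_perm_matrix (R : realFieldType) N d (s : {perm 'I_N}) (k : nat) :
  line_sum d (perm_matrix R s) k = \sum_j (line d N (s j) j == k)%:R.
Proof.
rewrite /line_sum; under eq_bigr do rewrite big_mkcond.
rewrite exchange_big; apply: eq_bigr => j _.
rewrite (bigD1 (s j)) //= mxE eqxx big1 ?addr0 => [|i /negbTE ne].
  by case: eqP.
by rewrite mxE ne; case: ifP.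
Qed.

Lemma sum_fibres_eq1P (R : numDomainType) N (f : 'I_N -> nat) :
  (forall j, f j < N)%N ->
  (forall k : 'I_N, \sum_j ((f j == k)%:R : R) = 1) <-> injective f.
Proof.
move=> fN; pose g j := Ordinal (fN j).
have fibreE (k : 'I_N) : \sum_j ((f j == k)%:R : R) = #|[pred j | g j == k]|%:R.
  by rewrite -natr_sum -sum1_card [in RHS]big_mkcond.
split=> [fibre1 j1 j2 E | inj k].
  have /eqP := fibre1 (g j1); rewrite fibreE pnatr_eq1 => /eqP card1.
  by apply: (card_le1_eqP (eq_leq card1)); rewrite inE //; apply/eqP/val_inj.
have inj_g : injective g by move=> j1 j2 /(congr1 val)/inj.
apply/eqP; rewrite fibreE pnatr_eq1 -(cards1 k) -(card_preimset _ inj_g).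
by apply/eqP/eq_card => j; rewrite !inE.
Qed.

Lemma panmagic_permP (R : realFieldType) N (s : {perm 'I_N}) :
  panmagic_perm R s <-> forall d, injective (fun j : 'I_N => line d N (s j) j).
Proof.
have lineN d j : (line d N (s j) j < N)%N by rewrite line_lt.
rewrite /panmagic_perm panstochasticE; split=> [[_ Pl] d | inj].
  by apply: (sum_fibres_eq1P R (lineN d)).1 => k; rewrite -line_sum_perm_matrix.
split=> [i j | d k]; first by rewrite mxE; case: ifP.
by rewrite line_sum_perm_matrix; apply: (sum_fibres_eq1P R (lineN d)).2.
Qed.

Section ScalePerm.

Variables (n c : nat).
Hypothesis coprime_cn : coprime c n.

Definition scale_ord (j : 'I_n) : 'I_n :=
  Ordinal (ltn_pmod (c * j) (leq_ltn_trans (leq0n j) (ltn_ord j))).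

Lemma scale_ord_inj : injective scale_ord.
Proof. by move=> j1 j2 /(congr1 val) /mulmod_inj; apply. Qed.

Definition scale_perm : {perm 'I_n} := perm scale_ord_inj.

Lemma scale_perm_panmagic (R : realFieldType) :
  (0 < c)%N -> coprime c.-1 n -> coprime c.+1 n -> panmagic_perm R scale_perm.
Proof.
move=> c_gt0 co_pred co_succ; apply/panmagic_permP => d j1 j2; rewrite !permE /=.
have upE (j : 'I_n) : ((c * j %% n + j) %% n = c.+1 * j %% n)%N.
  by rewrite modnDml mulSn addnC.
have downE (j : 'I_n) : ((c * j %% n + (n - j)) %% n = c.-1 * j %% n)%N.
  rewrite modnDml -{1}(prednK c_gt0) mulSn addnC addnA subnK ?modnDl //.
  exact: ltnW.
case: d => /=.
- exact: mulmod_inj.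
- exact: val_inj.
- by rewrite !upE; exact: mulmod_inj.
- by rewrite !downE; exact: mulmod_inj.
Qed.

End ScalePerm.

Section BlockReduction.

Variables (R : realFieldType) (m n : nat) (A : 'M[R]_m) (sigma : {perm 'I_n}).
Variables (z : 'I_n) (c : {perm 'I_(m * n)} -> R).
Hypothesis c_ge0 : forall p, 0 <= c p.
Hypothesis tensmx_eq : A *t perm_matrix R sigma = \sum_p c p *: perm_matrix R p.

Local Notation idx a s := (@mxtens_index m n (a, s)).
Local Notation block i := (@mxtens_unindex m n i).1.

Definition restricts_to (p : {perm 'I_(m * n)}) (t : {perm 'I_m}) :=
  [forall b, p (idx b z) == idx (t b) (sigma z)].

(* The default 1 is junk: it is only taken off the support of c. *)
Definition block_perm p : {perm 'I_m} := odflt 1%g [pick t | restricts_to p t].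

Lemma coef_le_entry p j : c p <= (A *t perm_matrix R sigma) (p j) j.
Proof.
rewrite tensmx_eq summxE (bigD1 p) //= !mxE eqxx mulr1 lerDl.
by apply: sumr_ge0 => q _; rewrite !mxE; case: ifP; rewrite ?mulr1 ?mulr0.
Qed.

Lemma support_block_column p b : c p != 0 ->
  p (idx b z) = idx (block (p (idx b z))) (sigma z).
Proof.
move=> cp; have := coef_le_entry p (idx b z).
case: (mxtens_indexP (p _)) => a s; rewrite tensmxE mxE mxtens_indexK /=.
case: eqP => [-> _ //|_]; rewrite mulr0 => c_le0.
by move: cp; rewrite eq_le c_le0 c_ge0.
Qed.

Lemma restricts_to_block_perm p : c p != 0 -> restricts_to p (block_perm p).
Proof.
move=> cp; rewrite /block_perm; case: pickP => [t //|none].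
pose f b := block (p (idx b z)).
have f_inj : injective f.
  move=> b1 b2 E; have := congr1 (fun a => idx a (sigma z)) E.
  rewrite /= -!support_block_column // => /perm_inj /(congr1 (@mxtens_unindex m n)).
  by rewrite !mxtens_indexK => -[].
have /forallP := negbT (none (perm f_inj)); case => b.
by rewrite permE {1}support_block_column.
Qed.

Lemma restricts_to_panmagic p t :
  restricts_to p t -> panmagic_perm R p -> panmagic_perm R t.
Proof.
move=> /forallP pt; rewrite !panmagic_permP => p_inj d b1 b2 E.
have m_gt0 : (0 < m)%N by apply: leq_ltn_trans (ltn_ord b1).
have [s Ls] := line_mulnD d m_gt0 (ltn_ord (sigma z)) (ltn_ord z).
have : idx b1 z = idx b2 z.
  by apply: (p_inj d); rewrite /= !(eqP (pt _)) /= !Ls ?ltn_ord // E.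
by move/(congr1 (@mxtens_unindex m n)); rewrite !mxtens_indexK => -[].
Qed.

Lemma convex_comb_block :
  (forall p, c p != 0 -> panmagic_perm R p) -> \sum_p c p = 1 -> convex_comb_panmagic A.
Proof.
move=> c_panmagic c_sum1.
exists (fun t => \sum_(p | block_perm p == t) c p); split; [|split; [|split]].
- by move=> t; apply: sumr_ge0.
- move=> t; rewrite psumr_neq0 // => /hasP[p _ /andP[/eqP <- /lt0r_neq0 cp]].
  exact: restricts_to_panmagic (restricts_to_block_perm cp) (c_panmagic p cp).
- by rewrite -c_sum1 [RHS](partition_big block_perm xpredT).
- apply/matrixP => a b; rewrite summxE.
  have -> : A a b = (A *t perm_matrix R sigma) (idx a (sigma z)) (idx b z).
    by rewrite tensmxE mxE eqxx mulr1.
  rewrite tensmx_eq summxE (partition_big block_perm xpredT) //=.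
  apply: eq_bigr => t _; rewrite !mxE mulr_suml; apply: eq_bigr => p /eqP <-.
  rewrite !mxE; have [-> | cp] := eqVneq (c p) 0; first by rewrite !mul0r.
  rewrite (eqP (forallP (restricts_to_block_perm cp) b)).
  by rewrite (can_eq (@mxtens_indexK m n)) xpair_eqE eqxx andbT.
Qed.

End BlockReduction.

Lemma convex_comb_panmagic_tensmx_perm (R : realFieldType) m n (A : 'M[R]_m)
    (sigma : {perm 'I_n}) :
  (0 < n)%N -> convex_comb_panmagic (A *t perm_matrix R sigma) -> convex_comb_panmagic A.
Proof.
move=> n_gt0 [c [c_ge0 [c_panmagic [c_sum1 tensmx_eq]]]].
exact: (convex_comb_block (Ordinal n_gt0) c_ge0 tensmx_eq c_panmagic c_sum1).
Qed.

Theorem lemma4p2 (R : realFieldType) (m n : nat) :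
  (0 < m)%N -> (0 < n)%N -> gcdn n 6 = 1%N ->
  (exists A : 'M[R]_m, panstochastic A /\ ~ convex_comb_panmagic A) ->
  exists B : 'M[R]_(m * n), panstochastic B /\ ~ convex_comb_panmagic B.
Proof.
move=> _ n_gt0 gcd_n6 [A [A_pan A_not_comb]].
have co6 : coprime 6 n by rewrite /coprime gcdnC gcd_n6.
have co k : (k %| 6)%N -> coprime k n by move/coprime_dvdl; apply.
pose double := scale_perm (co 2 isT).
have double_panmagic : panmagic_perm R double.
  exact: scale_perm_panmagic (co 2 isT) R isT (co 1 isT) (co 3 isT).
exists (A *t perm_matrix R double); split; first exact: panstochastic_tensmx.
by move/(convex_comb_panmagic_tensmx_perm n_gt0).
Qed.
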